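(* Let ${\bm X}={\bm Y}$ be a finite pseudometric space with pseudometric $d_{\bm X}$ and let $C=d_{\bm X}$. Let $m^{\bm X}_\bullet,m^{\bm Y}_\bullet$ be irreducible and aperiodic Markov transition kernels on ${\bm X}$ with unique stationary distributions $\mu^{\bm X},\mu^{\bm Y}$. Define $C^{(0)}=C$ and $C^{(l)}_{ij}=d_{\mathrm W}(m^{\bm X}_i,m^{\bm Y}_j;C^{(l-1)})$ for $l\ge1$, and let $c=d^{(\infty)}_{\mathrm{WL}}\big(({\bm X},m^{\bm X}_\bullet,\mu^{\bm X}),({\bm Y},m^{\bm Y}_\bullet,\mu^{\bm Y});C\big)$. Then there exists $\rho\in[0,1)$, depending on $m^{\bm X}_\bullet$ and $m^{\bm Y}_\bullet$, such that for all $k\in\mathbb{N}$ and all $i,j$, $|C^{(k)}_{ij}-c|\le2\rho^k\|C\|_\infty$.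
   Context: $d_{\mathrm W}(\alpha,\beta;D)=\inf_{(X,Y)\in\mathcal{C}(\alpha,\beta)}\mathbb{E}\,D(X,Y)$ with $\mathcal{C}(\alpha,\beta)$ the set of couplings. For finite Markov chains $\mathcal{X}=({\bm X},m^{\bm X}_\bullet,\nu^{\bm X})$, $\mathcal{Y}=({\bm Y},m^{\bm Y}_\bullet,\nu^{\bm Y})$, a Markovian coupling is a (possibly time-inhomogeneous) Markov chain $(X_t,Y_t)_{t\in\mathbb{N}}$ on ${\bm X}\times{\bm Y}$ with $\mathrm{law}(X_0,Y_0)\in\mathcal{C}(\nu^{\bm X},\nu^{\bm Y})$ and, for all $t,x,y$, the conditional law of $(X_{t+1},Y_{t+1})$ given $(X_t,Y_t)=(x,y)$ in $\mathcal{C}(m^{\bm X}_x,m^{\bm Y}_y)$. $d^{(k)}_{\mathrm{WL}}(\mathcal{X},\mathcal{Y};C)=\inf\mathbb{E}\,C(X_k,Y_k)$ over Markovian couplings, and (for stationary chains) $d^{(\infty)}_{\mathrm{WL}}=\sup_{k}d^{(k)}_{\mathrm{WL}}=\lim_k d^{(k)}_{\mathrm{WL}}$. $\|C\|_\infty=\max_{i,j}|C_{ij}|$. *)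

From HB Require Import structures.
From mathcomp Require Import all_boot all_order all_algebra.
From mathcomp Require Import all_classical all_reals.
Set Implicit Arguments. Unset Strict Implicit. Unset Printing Implicit Defensive.
Import Order.TTheory GRing.Theory Num.Theory.
Local Open Scope ring_scope.
Local Open Scope classical_set_scope.

Section Defs.
Variables (R : realType) (T : finType).

Definition is_distr (a : T -> R) : Prop :=
  (forall x, 0 <= a x) /\ \sum_x a x = 1.

Definition is_kernel (m : T -> T -> R) : Prop := forall x, is_distr (m x).

Fixpoint kpow (m : T -> T -> R) (n : nat) : T -> T -> R :=
  match n with
  | 0 => fun x y => if x == y then 1 else 0
  | n'.+1 => fun x z => \sum_y kpow m n' x y * m y z
  end.

Definition irreducible (m : T -> T -> R) : Prop :=
  forall x y, exists n, 0 < kpow m n x y.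

(* period of every state is 1: gcd {n > 0 | m^n(x,x) > 0} = 1 *)
Definition aperiodic (m : T -> T -> R) : Prop :=
  forall x, forall d : nat,
    (forall n : nat, (0 < n)%N -> 0 < kpow m n x x -> (d %| n)%N) -> d = 1%N.

Definition stationary (m : T -> T -> R) (mu : T -> R) : Prop :=
  is_distr mu /\ forall y, \sum_x mu x * m x y = mu y.

Definition pseudometric (d : T -> T -> R) : Prop :=
  (forall x, d x x = 0) /\ (forall x y, d x y = d y x) /\
  (forall x y z, d x z <= d x y + d y z).

Definition coupling (a b : T -> R) (p : T -> T -> R) : Prop :=
  (forall x y, 0 <= p x y) /\
  (forall x, \sum_y p x y = a x) /\ (forall y, \sum_x p x y = b y).

Definition expect2 (p : T -> T -> R) (D : T -> T -> R) : R :=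
  \sum_x \sum_y p x y * D x y.

Definition dW (a b : T -> R) (D : T -> T -> R) : R :=
  inf [set r | exists p, coupling a b p /\ r = expect2 p D].

Fixpoint Citer (mX mY : T -> T -> R) (C : T -> T -> R) (l : nat) : T -> T -> R :=
  match l with
  | 0 => C
  | l'.+1 => fun i j => dW (mX i) (mY j) (Citer mX mY C l')
  end.

(* Markovian coupling: initial coupling p0 and time-inhomogeneous kernels
   K t x y x' y' = P((X_{t+1},Y_{t+1}) = (x',y') | (X_t,Y_t) = (x,y)) *)
Definition markov_coupling (mX mY : T -> T -> R) (nuX nuY : T -> R)
    (p0 : T -> T -> R) (K : nat -> T -> T -> T -> T -> R) : Prop :=
  coupling nuX nuY p0 /\ forall t x y, coupling (mX x) (mY y) (K t x y).

Fixpoint claw (p0 : T -> T -> R) (K : nat -> T -> T -> T -> T -> R) (t : nat)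
    : T -> T -> R :=
  match t with
  | 0 => p0
  | t'.+1 => fun x' y' => \sum_x \sum_y claw p0 K t' x y * K t' x y x' y'
  end.

Definition dWLk (mX mY : T -> T -> R) (nuX nuY : T -> R) (C : T -> T -> R)
    (k : nat) : R :=
  inf [set r | exists p0 K, markov_coupling mX mY nuX nuY p0 K /\
                            r = expect2 (claw p0 K k) C].

Definition dWLinf (mX mY : T -> T -> R) (nuX nuY : T -> R) (C : T -> T -> R) : R :=
  sup [set dWLk mX mY nuX nuY C k | k in [set: nat]].

Definition supnorm (C : T -> T -> R) : R :=
  \big[Num.max/0]_(i : T) \big[Num.max/0]_(j : T) `|C i j|.

End Defs.

(* Moving one start point changes the iterated cost C^(k) by at most ||C||
   times the probability that two independent copies of that chain, started at
   the two points, have not met within k steps: couple the first steps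
   independently and use the triangle inequality. By irreducibility and
   aperiodicity the two copies meet with positive probability within some
   fixed N steps from any pair of points, so this probability, hence the
   oscillation of C^(k), decays geometrically. Finally, d_WL^(k') lies between
   the extreme values of C^(k') for every k' (a Markovian coupling propagates
   the iteration one step at a time, and composing near-optimal one-step
   couplings backwards in time nearly attains it), and C^(k') is obtained by
   iterating from C^(k) for k' >= k; with monotonicity in k' this places
   d_WL^(infty) within the range of C^(k). *)

From HB Require Import structures.
From mathcomp Require Import all_boot all_order all_algebra.
From mathcomp Require Import all_classical all_reals.
From mathcomp Require Import lra zify.
Import Order.TTheory GRing.Theory Num.Theory.
Local Open Scope ring_scope.
Set Implicit Arguments. Unset Strict Implicit. Unset Printing Implicit Defensive.

Section Wasserstein.
Variables (R : realType) (T : finType).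
Implicit Types (a b : T -> R) (p h C E : T -> T -> R).

Lemma le_supnorm C i j : `|C i j| <= supnorm C.
Proof.
apply: le_trans (le_bigmax _ (fun i => \big[Num.max/0]_j `|C i j|) i).
exact: (le_bigmax _ (fun j => `|C i j|)).
Qed.

Lemma supnorm_bounds C i j : - supnorm C <= C i j <= supnorm C.
Proof. by rewrite -ler_norml le_supnorm. Qed.

Lemma supnorm_ge0 C : 0 <= supnorm C.
Proof. exact: bigmax_ge_id. Qed.

Lemma coupling_mass a b p : is_distr a -> coupling a b p ->
  \sum_x \sum_y p x y = 1.
Proof. by move=> [_ <-] [_ [pa _]]; apply: eq_bigr => x _; rewrite pa. Qed.

Lemma expect2_ge a b p h L : is_distr a -> coupling a b p ->
  (forall x y, L <= h x y) -> L <= expect2 p h.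
Proof.
move=> Ha Hp HL; rewrite /expect2 -[L]mul1r -(coupling_mass Ha Hp) mulr_suml.
apply: ler_sum => x _; rewrite mulr_suml; apply: ler_sum => y _.
by apply: ler_wpM2l; [case: Hp | exact: HL].
Qed.

Lemma expect2_le a b p h U : is_distr a -> coupling a b p ->
  (forall x y, h x y <= U) -> expect2 p h <= U.
Proof.
move=> Ha Hp HU; rewrite /expect2 -[U]mul1r -(coupling_mass Ha Hp) mulr_suml.
apply: ler_sum => x _; rewrite mulr_suml; apply: ler_sum => y _.
by apply: ler_wpM2l; [case: Hp | exact: HU].
Qed.

Lemma ler_expect2 p h1 h2 : (forall x y, 0 <= p x y) ->
  (forall x y, h1 x y <= h2 x y) -> expect2 p h1 <= expect2 p h2.
Proof.
by move=> p0 h12; do 2!apply: ler_sum => ? _; rewrite ler_wpM2l.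
Qed.

Lemma expect2_addr a b p h e : is_distr a -> coupling a b p ->
  expect2 p (fun x y => h x y + e) = expect2 p h + e.
Proof.
move=> Ha Hp; rewrite /expect2 -[in RHS](mulr1 e) -(coupling_mass Ha Hp).
rewrite mulr_sumr -big_split; apply: eq_bigr => x _ /=.
by rewrite mulr_sumr -big_split; apply: eq_bigr => y _; rewrite /= mulrDr [e * _]mulrC.
Qed.

Lemma coupling_prod a b : is_distr a -> is_distr b ->
  coupling a b (fun x y => a x * b y).
Proof.
move=> [a0 a1] [b0 b1]; split; first by move=> x y; rewrite mulr_ge0.
by split=> [x|y]; rewrite -?mulr_sumr -?mulr_suml ?b1 ?a1 ?mulr1 ?mul1r.
Qed.

Lemma coupling_swap a b p : coupling a b p -> coupling b a (fun y x => p x y).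
Proof. by case=> p0 [pa pb]; split; [move=> y x; exact: p0 | split]. Qed.

Lemma dW_lbound a b h : is_distr a ->
  has_lbound [set r | exists p, coupling a b p /\ r = expect2 p h].
Proof.
move=> Ha; exists (- supnorm h) => r [q [Hq ->]].
by apply: expect2_ge Ha Hq _ => x y; case/andP: (supnorm_bounds h x y).
Qed.

Lemma dW_le_expect2 a b p h : is_distr a -> coupling a b p ->
  dW a b h <= expect2 p h.
Proof. by move=> Ha Hp; apply: ge_inf; [exact: dW_lbound | exists p]. Qed.

Lemma le_dW a b h M : is_distr a -> is_distr b ->
  (forall p, coupling a b p -> M <= expect2 p h) -> M <= dW a b h.
Proof.
move=> Ha Hb HM; apply: lb_le_inf; last by move=> r [q [Hq ->]]; exact: HM.
by exists (expect2 (fun x y => a x * b y) h), (fun x y => a x * b y);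
  split => //; exact: coupling_prod.
Qed.

Lemma dW_near_opt a b h e : is_distr a -> is_distr b -> 0 < e ->
  exists p, coupling a b p /\ expect2 p h <= dW a b h + e.
Proof.
move=> Ha Hb e0.
have Hinf : has_inf [set r | exists p, coupling a b p /\ r = expect2 p h].
  split; last exact: dW_lbound.
  by exists (expect2 (fun x y => a x * b y) h), (fun x y => a x * b y);
    split => //; exact: coupling_prod.
by have [r [q [Hq ->]] /ltW] := inf_adherent e0 Hinf; exists q.
Qed.

Lemma dW_swap a b h : dW b a (fun y x => h x y) = dW a b h.
Proof.
rewrite /dW; congr inf; apply/seteqP; split=> r [p [Hp ->]].
  by exists (fun x y => p y x); split; [exact: coupling_swap | exact: exchange_big].
by exists (fun y x => p x y); split; [exact: coupling_swap | exact: exchange_big].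
Qed.

(* Bound [dW a b h] by the cost of the product coupling of [a] and [b], with
   [b] written as the second marginal of an arbitrary coupling [p] of [a'] and
   [b]: it then differs from the cost of [p] only in replacing the first
   coordinate [x'] by an independent [x ~ a]. *)
Lemma dW_sub_le a a' b h E : is_distr a -> is_distr a' -> is_distr b ->
  (forall x x' y, h x y - h x' y <= E x x') ->
  dW a b h - dW a' b h <= \sum_x \sum_x' a x * a' x' * E x x'.
Proof.
move=> Ha Ha' Hb HE; rewrite lerBlDr addrC -lerBlDr.
apply: le_dW => // p Hp; have [p0 [pa' pb]] := Hp.
have Eprod : expect2 (fun x y => a x * b y) h
    = \sum_x a x * \sum_x' \sum_y p x' y * h x y.
  apply: eq_bigr => x _; rewrite exchange_big mulr_sumr; apply: eq_bigr => y _.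
  by rewrite -pb -mulrA mulr_suml.
have Ep : expect2 p h = \sum_x a x * \sum_x' \sum_y p x' y * h x' y.
  by rewrite -mulr_suml (proj2 Ha) mul1r.
have EE : \sum_x \sum_x' a x * a' x' * E x x'
    = \sum_x a x * \sum_x' \sum_y p x' y * E x x'.
  apply: eq_bigr => x _; rewrite mulr_sumr; apply: eq_bigr => x' _.
  by rewrite -pa' -mulrA mulr_suml.
rewrite lerBlDr Ep EE -big_split /=.
apply: le_trans (dW_le_expect2 h Ha (coupling_prod Ha Hb)) _.
rewrite Eprod; apply: ler_sum => x _; rewrite -mulrDr.
apply: ler_wpM2l; first exact: (proj1 Ha).
rewrite -big_split /=; apply: ler_sum => x' _; rewrite -big_split /=.
apply: ler_sum => y _; rewrite -mulrDr; apply: ler_wpM2l => //.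
by rewrite -lerBlDl.
Qed.

End Wasserstein.

Section NonMeet.
Variables (R : realType) (T : finType) (m : T -> T -> R).
Implicit Types h : T -> T -> R.

Definition nonmeet_step h i i' : R :=
  if i == i' then 0 else \sum_x \sum_x' m i x * m i' x' * h x x'.

(* [nonmeet n i i'] is the probability that two independent [m]-chains started
   at [i] and [i'] have not met within [n] steps. *)
Definition nonmeet n : T -> T -> R :=
  iter n nonmeet_step (fun i i' => (i != i')%:R).

Lemma nonmeetS n i i' : nonmeet n.+1 i i' =
  if i == i' then 0 else \sum_x \sum_x' m i x * m i' x' * nonmeet n x x'.
Proof. by []. Qed.

Lemma nonmeet_diag n i : nonmeet n i i = 0.
Proof. by case: n => [|n]; rewrite ?nonmeetS /nonmeet /= eqxx. Qed.

Hypothesis Hm : is_kernel m.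

Lemma kernel_prod_ge0 i i' x x' : 0 <= m i x * m i' x'.
Proof. by rewrite mulr_ge0 //; [case: (Hm i) | case: (Hm i')]. Qed.

Lemma kernel_prod_sum i i' : \sum_x \sum_x' m i x * m i' x' = 1.
Proof.
rewrite -(proj2 (Hm i)); apply: eq_bigr => x _.
by rewrite -mulr_sumr (proj2 (Hm i')) mulr1.
Qed.

Lemma nonmeet_le1 n i i' : nonmeet n i i' <= 1.
Proof.
elim: n i i' => [|n IH] i i'; first by rewrite /nonmeet /=; case: eqP.
rewrite nonmeetS; case: eqP => // _; rewrite -(kernel_prod_sum i i').
by do 2!apply: ler_sum => ? _; rewrite ler_piMr ?kernel_prod_ge0.
Qed.

Lemma iter_nonmeet_step_le h1 h2 : (forall x x', h1 x x' <= h2 x x') ->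
  forall n i i', iter n nonmeet_step h1 i i' <= iter n nonmeet_step h2 i i'.
Proof.
move=> h12; elim=> [|n IH] i i' //=; rewrite /nonmeet_step; case: eqP => // _.
by do 2!apply: ler_sum => ? _; rewrite ler_wpM2l ?kernel_prod_ge0.
Qed.

Lemma iter_nonmeet_stepZ h c n i i' :
  iter n nonmeet_step (fun x x' => c * h x x') i i' = c * iter n nonmeet_step h i i'.
Proof.
elim: n i i' => [|n IH] i i' //=; rewrite /nonmeet_step; case: eqP => _.
  by rewrite mulr0.
rewrite mulr_sumr; apply: eq_bigr => x _; rewrite mulr_sumr.
by apply: eq_bigr => x' _; rewrite IH mulrCA.
Qed.

Lemma nonmeet_le_neq n M i i' : (forall x x', nonmeet n x x' <= M) ->
  nonmeet n i i' <= M * (i != i')%:R.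
Proof. by case: eqP => [->|_] HM; rewrite ?nonmeet_diag ?mulr0 ?mulr1. Qed.

Lemma nonmeetD_le N n a M i i' : (forall x x', nonmeet N x x' <= a) ->
  (forall x x', nonmeet n x x' <= M) -> 0 <= M -> nonmeet (N + n) i i' <= M * a.
Proof.
move=> HN Hn M0; rewrite /nonmeet iterD.
apply: le_trans (iter_nonmeet_step_le (fun x x' => nonmeet_le_neq x x' Hn) N i i') _.
rewrite (iter_nonmeet_stepZ (fun x x' => (x != x')%:R)); exact: ler_wpM2l (HN i i').
Qed.

Lemma nonmeet_nonincr n k i i' : nonmeet (n + k) i i' <= nonmeet n i i'.
Proof.
rewrite /nonmeet iterD; apply: iter_nonmeet_step_le => x x'.
by rewrite -[leRHS]mul1r nonmeet_le_neq // => ? ?; exact: nonmeet_le1.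
Qed.

Lemma nonmeet_le_expr N a : (forall x x', nonmeet N x x' <= a) -> 0 <= a ->
  forall k i i', nonmeet k i i' <= a ^+ (k %/ N).
Proof.
move=> HN a0 k i i'; rewrite {1}(divn_eq k N).
elim: (k %/ N)%N (k %% N)%N i i' => [|q IH] r i i'; first by rewrite expr0 nonmeet_le1.
by rewrite mulSn -addnA exprSr nonmeetD_le ?exprn_ge0.
Qed.

End NonMeet.

Section Iterates.
Variables (R : realType) (T : finType) (mX mY : T -> T -> R).
Hypotheses (HX : is_kernel mX) (HY : is_kernel mY).

Lemma Citer_bounds d L U : (forall x y, L <= d x y <= U) ->
  forall n x y, L <= Citer mX mY d n x y <= U.
Proof.
move=> Hd; elim=> [|n IH] x y //=; apply/andP; split.
  apply: le_dW => // p Hp.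
  by apply: expect2_ge (HX x) Hp _ => u v; case/andP: (IH u v).
apply: le_trans (dW_le_expect2 _ (HX x) (coupling_prod (HX x) (HY y))) _.
by apply: expect2_le (HX x) (coupling_prod (HX x) (HY y)) _ => u v; case/andP: (IH u v).
Qed.

Lemma Citer_add d s k : Citer mX mY d (s + k) = Citer mX mY (Citer mX mY d k) s.
Proof. by elim: s => //= s ->. Qed.

Lemma Citer_swap d n x y :
  Citer mY mX (fun y x => d x y) n y x = Citer mX mY d n x y.
Proof.
elim: n x y => [|n IH] x y //=; rewrite -dW_swap; congr dW.
by apply/funext => y'; apply/funext => x'; exact: IH.
Qed.

Lemma Citer_subl d B : (forall x x' y, d x y - d x' y <= nonmeet mX 0 x x' * B) ->
  forall n x x' y,
    Citer mX mY d n x y - Citer mX mY d n x' y <= nonmeet mX n x x' * B.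
Proof.
move=> H0; elim=> [|n IH] x x' y //; rewrite nonmeetS /=.
case: eqP => [->|_]; first by rewrite subrr mul0r.
rewrite mulr_suml; under eq_bigr do rewrite mulr_suml.
under eq_bigr do under eq_bigr do rewrite -mulrA.
exact: dW_sub_le.
Qed.

End Iterates.

Section Kpow.
Variables (R : realType) (T : finType) (m : T -> T -> R).

Lemma sum_kpow0l (F : T -> R) x : \sum_y kpow m 0 x y * F y = F x.
Proof.
rewrite (bigD1 x) //= eqxx mul1r big1 ?addr0 // => y /negbTE.
by rewrite eq_sym => ->; rewrite mul0r.
Qed.

Lemma sum_kpow0r (F : T -> R) z : \sum_y F y * kpow m 0 y z = F z.
Proof.
by rewrite (bigD1 z) //= eqxx mulr1 big1 ?addr0 // => y /negbTE ->; rewrite mulr0.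
Qed.

Hypothesis Hm : is_kernel m.

Lemma kpow_ge0 n x y : 0 <= kpow m n x y.
Proof.
elim: n x y => [|n IH] x y /=; first by case: eqP.
by apply: sumr_ge0 => z _; rewrite mulr_ge0 //; case: (Hm z).
Qed.

Lemma kpow_sum1 n x : \sum_y kpow m n x y = 1.
Proof.
elim: n x => [|n IH] x.
  by rewrite -[RHS](sum_kpow0l (fun=> 1) x); apply: eq_bigr => y _; rewrite mulr1.
rewrite /= exchange_big /= -(IH x); apply: eq_bigr => y _.
by rewrite -mulr_sumr (proj2 (Hm y)) mulr1.
Qed.

Lemma kpow_le1 n x y : kpow m n x y <= 1.
Proof.
rewrite -(kpow_sum1 n x) (bigD1 y) //= lerDl.
by apply: sumr_ge0 => z _; exact: kpow_ge0.
Qed.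

Lemma kpowD n p x z : kpow m (n + p) x z = \sum_y kpow m n x y * kpow m p y z.
Proof.
elim: p z => [|p IH] z; first by rewrite addn0 sum_kpow0r.
rewrite addnS /=; under eq_bigr do rewrite IH mulr_suml.
rewrite exchange_big /=; apply: eq_bigr => y _.
by rewrite mulr_sumr; apply: eq_bigr => w _; rewrite mulrA.
Qed.

Lemma kpow1 x y : kpow m 1 x y = m x y.
Proof. exact: sum_kpow0l. Qed.

Lemma kpowSl n x z : kpow m n.+1 x z = \sum_y m x y * kpow m n y z.
Proof. by rewrite -add1n kpowD; apply: eq_bigr => y _; rewrite kpow1. Qed.

Lemma kpowD_ge n p x y z : kpow m n x y * kpow m p y z <= kpow m (n + p) x z.
Proof.
rewrite kpowD (bigD1 y) //= lerDl.
by apply: sumr_ge0 => w _; rewrite mulr_ge0 ?kpow_ge0.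
Qed.

Lemma nonmeet_le_overlap n i i' :
  nonmeet m n i i' <= 1 - \sum_z kpow m n i z * kpow m n i' z.
Proof.
elim: n i i' => [|n IH] i i'.
  rewrite sum_kpow0l /nonmeet /= eq_sym.
  by case: eqP => _; rewrite ?subrr ?subr0.
have overlapS : \sum_z kpow m n.+1 i z * kpow m n.+1 i' z =
    \sum_x \sum_x' m i x * m i' x' * \sum_z kpow m n x z * kpow m n x' z.
  under eq_bigr do rewrite !kpowSl mulr_suml.
  rewrite exchange_big; apply: eq_bigr => x _; under eq_bigr do rewrite mulr_sumr.
  rewrite exchange_big; apply: eq_bigr => x' _.
  by rewrite mulr_sumr; apply: eq_bigr => z _; rewrite mulrACA.
rewrite nonmeetS; case: eqP => _.
  rewrite subr_ge0 -(kpow_sum1 n.+1 i); apply: ler_sum => z _.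
  by rewrite ler_piMr ?kpow_ge0 ?kpow_le1.
rewrite overlapS -{1}(kernel_prod_sum Hm i i') -sumrB; apply: ler_sum => x _.
rewrite -sumrB; apply: ler_sum => x' _.
by rewrite -[X in _ <= X - _]mulr1 -mulrBr ler_wpM2l ?kernel_prod_ge0.
Qed.

End Kpow.

Section ReturnTimes.
Variables (R : realType) (T : finType) (m : T -> T -> R).

Definition return_time x n := (0 < n)%N && (0 < kpow m n x x).

Hypotheses (Hm : is_kernel m) (Hirr : irreducible m) (Hap : aperiodic m).

Lemma return_timeD x a b :
  return_time x a -> return_time x b -> return_time x (a + b).
Proof.
case/andP=> a0 ka /andP[b0 kb]; rewrite /return_time addn_gt0 a0 /=.
by apply: lt_le_trans (kpowD_ge Hm a b x x x); exact: mulr_gt0.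
Qed.

Lemma return_timeM x a k : return_time x a -> (0 < k)%N -> return_time x (k * a).
Proof.
move=> ra; elim: k => [//|[|k] IH] _; first by rewrite mul1n.
by rewrite mulSn return_timeD ?IH.
Qed.

Lemma return_time_exists x : exists s, return_time x s.
Proof.
have /existsP[y mxy] : [exists y, 0 < m x y].
  apply: contraT; rewrite negb_exists => /forallP Hy.
  have := proj2 (Hm x); rewrite big1 => [/eqP|y _]; first by rewrite eq_sym oner_eq0.
  by apply/eqP; rewrite eq_le (proj1 (Hm x) y) andbT leNgt Hy.
have [n kyx] := Hirr y x; exists (1 + n)%N; rewrite /return_time addn_gt0 /=.
by apply: lt_le_trans (kpowD_ge Hm 1 n x y x); rewrite kpow1 // mulr_gt0.
Qed.

(* If [s] and [s + g] are return times and some return time [n] is not a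
   multiple of [g], write [n = q * g + r] with [0 < r < g]: then
   [n + (q + 1) * s] and [(q + 1) * (s + g)] are return times at distance
   [g - r < g]. Aperiodicity stops this descent only at [g = 1]. *)
Lemma return_time_gap1 x g : (0 < g)%N ->
  (exists s, return_time x s /\ return_time x (s + g)) ->
  exists s, return_time x s /\ return_time x (s + 1).
Proof.
elim/ltn_ind: g => g IH g0 [s [rs rsg]].
have [Hdvd|] := pselect (forall n, return_time x n -> (g %| n)%N).
  suff g1 : g = 1%N by exists s; rewrite -g1.
  by apply: (@Hap x g) => n n0 kn; apply: Hdvd; exact/andP.
move=> /existsNP[n /not_implyP[rn ndvd]].
have s0 : (0 < s)%N by case/andP: rs.
have rg : (n %% g < g)%N by rewrite ltn_pmod.
have r0 : (0 < n %% g)%N by rewrite lt0n; apply/negP; exact: ndvd.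
apply: (IH (g - n %% g)%N); [lia | lia | exists (n + (n %/ g).+1 * s)%N].
have -> : (n + (n %/ g).+1 * s + (g - n %% g) = (n %/ g).+1 * (s + g))%N.
  by rewrite {1}(divn_eq n g); lia.
by split; [exact: return_timeD rn (return_timeM rs _) | exact: return_timeM rsg _].
Qed.

Lemma return_time_consec x : exists s, return_time x s /\ return_time x (s + 1).
Proof.
have [s rs] := return_time_exists x.
apply: (@return_time_gap1 x s); first by case/andP: rs.
by exists s; rewrite addnn -mul2n return_timeM.
Qed.

Lemma kpow_common_support i i' : exists n z, 0 < kpow m n i z /\ 0 < kpow m n i' z.
Proof.
have [[|a] ka] := Hirr i' i; first by exists 0%N, i; rewrite /= eqxx ltr01.
have [s [rs rs1]] := return_time_consec i.
exists (a.+1 * (s + 1))%N, i; split; first by case/andP: (return_timeM rs1 (ltn0Sn a)).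
rewrite (_ : (a.+1 * (s + 1) = a.+1 + a.+1 * s)%N); last by lia.
apply: lt_le_trans (kpowD_ge Hm _ _ i' i i); rewrite mulr_gt0 //.
by case/andP: (return_timeM rs (ltn0Sn a)).
Qed.

Lemma nonmeet_lt1 i i' : exists n, nonmeet m n i i' < 1.
Proof.
have [n [z [kz kz']]] := kpow_common_support i i'.
exists n; apply: le_lt_trans (nonmeet_le_overlap Hm n i i') _.
rewrite ltrBlDr ltrDl (bigD1 z) //= ltr_pwDl ?mulr_gt0 //.
by apply: sumr_ge0 => w _; rewrite mulr_ge0 ?kpow_ge0.
Qed.

Lemma nonmeet_unif_lt1 : exists N a, (0 < N)%N /\ 0 <= a < 1 /\
  forall n, (N <= n)%N -> forall i i', nonmeet m n i i' <= a.
Proof.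
have [f Hf] := choice (fun p : T * T => nonmeet_lt1 p.1 p.2).
pose N := (\max_(p : T * T) f p).+1.
have ltN p : nonmeet m N p.1 p.2 < 1.
  have fN : (f p <= N)%N by apply: leqW; exact: (leq_bigmax p).
  by rewrite -(subnKC fN); apply: le_lt_trans (nonmeet_nonincr Hm _ _ _ _) (Hf p).
exists N, (\big[Num.max/0]_(p : T * T) nonmeet m N p.1 p.2).
split=> //; split.
  by apply/andP; split; [exact: bigmax_ge_id | apply: bigmax_lt => // p _].
move=> n Nn i i'; rewrite -(subnKC Nn).
apply: le_trans (nonmeet_nonincr Hm N _ i i') _.
exact: (le_bigmax _ (fun p : T * T => nonmeet m N p.1 p.2) (i, i')).
Qed.

End ReturnTimes.

Section Oscillation.
Variables (R : realType) (T : finType) (mX mY : T -> T -> R).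
Hypotheses (HX : is_kernel mX) (HY : is_kernel mY).
Implicit Types d : T -> T -> R.

Lemma Citer_subr d B : (forall x y y', d x y - d x y' <= nonmeet mY 0 y y' * B) ->
  forall n x y y',
    Citer mX mY d n x y - Citer mX mY d n x y' <= nonmeet mY n y y' * B.
Proof.
move=> H0 n x y y'; rewrite -!(Citer_swap _ _ d).
by apply: (Citer_subl HY HX) => u u' v; exact: H0.
Qed.

Lemma pseudometric_bounds d : pseudometric d -> forall x y, 0 <= d x y <= supnorm d.
Proof.
move=> [d0 [dC dtri]] x y; case/andP: (supnorm_bounds d x y) => _ ->.
by have := dtri x y x; rewrite d0 (dC y x); lra.
Qed.

Lemma pseudometric_le_neq d : pseudometric d ->
  forall x x', d x x' <= (x != x')%:R * supnorm d.
Proof.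
move=> Hd x x'; case: eqP => [->|_]; first by rewrite (proj1 Hd) mul0r.
by rewrite mul1r; case/andP: (pseudometric_bounds Hd x x').
Qed.

Lemma Citer_osc d : pseudometric d -> forall n x y x' y',
  Citer mX mY d n x y - Citer mX mY d n x' y'
    <= Num.min 1 (nonmeet mX n x x' + nonmeet mY n y y') * supnorm d.
Proof.
move=> Hd n x y x' y'; have [_ [dC dtri]] := Hd.
rewrite minr_pMl ?supnorm_ge0 // le_min mul1r mulrDl; apply/andP; split.
  have /andP[+ _] := Citer_bounds HX HY (pseudometric_bounds Hd) n x' y'.
  by have /andP[_] := Citer_bounds HX HY (pseudometric_bounds Hd) n x y; lra.
have subl : forall u u' v, d u v - d u' v <= nonmeet mX 0 u u' * supnorm d.
  by move=> u u' v; have := dtri u u' v; have := pseudometric_le_neq Hd u u'; lra.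
have subr : forall u v v', d u v - d u v' <= nonmeet mY 0 v v' * supnorm d.
  move=> u v v'; have := dtri u v' v; rewrite (dC v' v).
  by have := pseudometric_le_neq Hd v v'; lra.
have := Citer_subl HX HY subl n x x' y; have := Citer_subr subr n x' y y'; lra.
Qed.

End Oscillation.

Section GeometricRate.
Variable R : realType.

Lemma bernoulli_le (x : R) n : 0 <= x -> x <= 1 -> 1 - n%:R * x <= (1 - x) ^+ n.
Proof.
move=> x0 x1; elim: n => [|n IH]; first by rewrite mul0r subr0 expr0.
rewrite exprSr -natr1; apply: le_trans (_ : (1 - n%:R * x) * (1 - x) <= _).
  have : 0 <= n%:R * x * x by rewrite !mulr_ge0.
  lra.
by rewrite ler_wpM2r // subr_ge0.
Qed.

(* [rho = 1 - (1 - b) / (2 N)] with [b = max a (1/2)], so that [b <= rho ^+ (2 N)]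
   by Bernoulli; the factor 2 absorbs the rounding in [k %/ N], and [b >= 1/2]
   covers [k < N], where only the trivial bound [1] is available. *)
Lemma geometric_rate N (a : R) : (0 < N)%N -> 0 <= a -> a < 1 ->
  exists rho, 0 <= rho < 1 /\
    forall k, Num.min 1 (2 * a ^+ (k %/ N)) <= 2 * rho ^+ k.
Proof.
move=> N0 a0 a1; pose b := Num.max a (1 / 2).
have ab : a <= b by rewrite le_max lexx.
have hb : 1 / 2 <= b by rewrite le_max lexx orbT.
have b1 : b < 1 by rewrite gt_max a1 /=; lra.
have N2 : 0 < (2 * N)%:R :> R by rewrite ltr0n muln_gt0.
pose x := (1 - b) / (2 * N)%:R.
have x0 : 0 < x by rewrite divr_gt0 // subr_gt0.
have x1 : x <= 1.
  rewrite ler_pdivrMr // mul1r; apply: le_trans (_ : 1 <= _); first lra.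
  by rewrite ler1n muln_gt0.
have rho2N : b <= (1 - x) ^+ (2 * N).
  have := bernoulli_le (2 * N) (ltW x0) x1.
  by rewrite /x mulrC divfK ?gt_eqF //; lra.
exists (1 - x); split; first by apply/andP; split; lra.
move=> k; have rho01 : 0 <= 1 - x <= 1 by apply/andP; split; lra.
have kq := ltn_ceil k N0; move: (k %/ N)%N kq => q kq.
have [q0|qpos] := posnP q.
  rewrite ge_min; apply/orP; left.
  have : (1 - x) ^+ (2 * N) <= (1 - x) ^+ k.
    by case/andP: rho01 => ? ?; apply: ler_wiXn2l => //; rewrite q0 in kq; lia.
  lra.
rewrite ge_min; apply/orP; right; rewrite ler_pM2l //.
apply: le_trans (_ : (1 - x) ^+ (2 * N * q) <= _); last first.
  by case/andP: rho01 => ? ?; apply: ler_wiXn2l => //; nia.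
have powq (u v : R) : 0 <= u -> u <= v -> u ^+ q <= v ^+ q.
  by move=> u0 uv; rewrite lerXn2r ?nnegrE // (le_trans u0 uv).
by rewrite exprM (le_trans (powq _ _ a0 ab)) // powq //; lra.
Qed.

End GeometricRate.

Section MarkovCouplings.
Variables (R : realType) (T : finType) (mX mY : T -> T -> R) (muX muY : T -> R).
Hypotheses (HX : is_kernel mX) (HY : is_kernel mY)
  (SX : stationary mX muX) (SY : stationary mY muY).
Implicit Types (p d h : T -> T -> R) (K : nat -> T -> T -> T -> T -> R).
Local Notation coupled := (markov_coupling mX mY muX muY).

Lemma claw_step p K t h :
  expect2 (claw p K t.+1) h = expect2 (claw p K t) (fun x y => expect2 (K t x y) h).
Proof.
rewrite /expect2 /=.
under eq_bigr do under eq_bigr do rewrite mulr_suml.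
under eq_bigr do rewrite exchange_big /=.
rewrite exchange_big /=; apply: eq_bigr => x _.
under eq_bigr do under eq_bigr do rewrite mulr_suml.
under eq_bigr do rewrite exchange_big /=.
rewrite exchange_big /=; apply: eq_bigr => y _.
rewrite mulr_sumr; apply: eq_bigr => x' _; rewrite mulr_sumr; apply: eq_bigr => y' _.
by rewrite mulrA.
Qed.

Lemma claw_shift p K s t x y :
  claw (claw p K s) (fun u => K (s + u)%N) t x y = claw p K (s + t) x y.
Proof.
elim: t x y => [|t IH] x y; first by rewrite addn0.
by rewrite addnS /=; apply: eq_bigr => x' _; apply: eq_bigr => y' _; rewrite IH.
Qed.

Lemma claw_coupling p K : coupled p K -> forall t, coupling muX muY (claw p K t).
Proof.
move=> [H0 HK]; elim=> [|t [IH0 [IH1 IH2]]] //=; split.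
  move=> x' y'; apply: sumr_ge0 => x _; apply: sumr_ge0 => y _.
  by rewrite mulr_ge0 //; case: (HK t x y).
split=> [x'|y']; rewrite exchange_big /=.
  rewrite -(proj2 SX x'); apply: eq_bigr => x _.
  rewrite exchange_big /= -IH1 mulr_suml; apply: eq_bigr => y _.
  by rewrite -mulr_sumr; case: (HK t x y) => _ [-> _].
rewrite -(proj2 SY y').
transitivity (\sum_x \sum_y claw p K t x y * mY y y').
  apply: eq_bigr => x _; rewrite exchange_big; apply: eq_bigr => y _.
  by rewrite -mulr_sumr; case: (HK t x y) => _ [_ ->].
by rewrite exchange_big; apply: eq_bigr => y _; rewrite -IH2 mulr_suml.
Qed.

Lemma markov_coupling_prod :
  coupled (fun x y => muX x * muY y) (fun _ x y x' y' => mX x x' * mY y y').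
Proof.
split=> [|t x y]; first exact: coupling_prod (proj1 SX) (proj1 SY).
exact: coupling_prod.
Qed.

Lemma dWLk_le_expect2 d k p K : coupled p K ->
  dWLk mX mY muX muY d k <= expect2 (claw p K k) d.
Proof.
move=> HK; apply: ge_inf; last by exists p, K.
exists (- supnorm d) => r [q0 [Q [HQ ->]]].
apply: expect2_ge (proj1 SX) (claw_coupling HQ k) _ => x y.
by case/andP: (supnorm_bounds d x y).
Qed.

Lemma le_dWLk d k M :
  (forall p K, coupled p K -> M <= expect2 (claw p K k) d) -> M <= dWLk mX mY muX muY d k.
Proof.
move=> HM; apply: lb_le_inf; last by move=> r [q0 [Q [HQ ->]]]; exact: HM.
by eexists; exists (fun x y => muX x * muY y), (fun _ x y x' y' => mX x x' * mY y y');
  split; first exact: markov_coupling_prod.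
Qed.

Lemma expect2_Citer_le d s t p K : coupled p K ->
  expect2 (claw p K t) (Citer mX mY d s) <= expect2 (claw p K (t + s)) d.
Proof.
move=> HK; elim: s t => [|s IH] t; first by rewrite addn0.
rewrite -addSnnS; apply: le_trans (IH _); rewrite claw_step.
apply: ler_expect2 => x y; first by case: (claw_coupling HK t).
by apply: dW_le_expect2 (HX x) _; case: HK => _ /(_ t x y).
Qed.

Lemma Citer_le_dWLk d k L : (forall x y, L <= Citer mX mY d k x y) ->
  L <= dWLk mX mY muX muY d k.
Proof.
move=> HL; apply: le_dWLk => p K HK; apply: le_trans (expect2_Citer_le d k 0 HK).
exact: expect2_ge (proj1 SX) (claw_coupling HK 0) HL.
Qed.

(* Couple the chains greedily backwards: at time [t], from [(x, y)], use an
   [e]-optimal coupling of [mX x] and [mY y] for the cost [Citer mX mY d (k - t.+1)]. *)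
Lemma near_opt_markov_coupling d k e : 0 < e -> exists p K, coupled p K /\
  expect2 (claw p K k) d <= expect2 p (Citer mX mY d k) + k%:R * e.
Proof.
move=> e0; have [f Hf] := choice (fun txy : nat * T * T =>
  dW_near_opt (Citer mX mY d (k - txy.1.1.+1)) (HX txy.1.2) (HY txy.2) e0).
pose p x y := muX x * muY y; pose K t x y := f (t, x, y).
have HK : coupled p K.
  split=> [|t x y]; first exact: coupling_prod (proj1 SX) (proj1 SY).
  by case: (Hf (t, x, y)).
exists p, K; split => //.
suff: forall t, (t <= k)%N ->
    expect2 (claw p K t) (Citer mX mY d (k - t))
      <= expect2 p (Citer mX mY d k) + t%:R * e.
  by move/(_ k (leqnn k)); rewrite subnn.
elim=> [|t IH] tk; first by rewrite subn0 mul0r addr0.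
rewrite -natr1 mulrDl mul1r addrA.
apply: (@le_trans _ _ (expect2 (claw p K t) (Citer mX mY d (k - t)) + e)).
  2: by rewrite lerD2r IH // ltnW.
rewrite claw_step -(expect2_addr _ e (proj1 SX) (claw_coupling HK t)).
apply: ler_expect2 => x y; first by case: (claw_coupling HK t).
by rewrite -(subnSK tk); case: (Hf (t, x, y)).
Qed.

Lemma dWLk_le_Citer d k U : (forall x y, Citer mX mY d k x y <= U) ->
  dWLk mX mY muX muY d k <= U.
Proof.
move=> HU; apply/ler_addgt0Pr => e e0.
have e'0 : 0 < e / k.+1%:R by rewrite divr_gt0 // ltr0n.
have [p [K [HK Hle]]] := near_opt_markov_coupling d k e'0.
apply: le_trans (dWLk_le_expect2 d k HK) _; apply: le_trans Hle _.
rewrite lerD ?(expect2_le (proj1 SX) (claw_coupling HK 0)) //.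
by rewrite mulrA ler_pdivrMr ?ltr0n // -natr1 mulrDr mulr1 mulrC lerDl ltW.
Qed.

Lemma dWLk_homo d k' k : (k' <= k)%N -> dWLk mX mY muX muY d k' <= dWLk mX mY muX muY d k.
Proof.
move=> kk; apply: le_dWLk => p K HK.
have HK' : coupled (claw p K (k - k')) (fun u => K (k - k' + u)%N).
  by split; [exact: claw_coupling | move=> t x y; case: HK => _; apply].
suff -> : claw p K k = claw (claw p K (k - k')) (fun u => K (k - k' + u)%N) k'.
  exact: dWLk_le_expect2.
by apply/funext => x; apply/funext => y; rewrite claw_shift subnK.
Qed.

Lemma dWLinf_between d k L U : (forall x y, L <= Citer mX mY d k x y <= U) ->
  L <= dWLinf mX mY muX muY d <= U.
Proof.
move=> HLU; pose S := [set dWLk mX mY muX muY d k' | k' in [set: nat]]%classic.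
have S0 : (S !=set0)%classic by exists (dWLk mX mY muX muY d 0), 0%N.
have HS : has_sup S.
  split=> //; exists (supnorm d) => r [k' _ <-]; apply: dWLk_le_Citer => x y.
  by case/andP: (Citer_bounds HX HY (@supnorm_bounds _ _ d) k' x y).
apply/andP; split.
  apply: le_trans (sup_upper_bound HS (ex_intro2 _ _ k I erefl)).
  by apply: Citer_le_dWLk => x y; case/andP: (HLU x y).
apply: ge_sup => // r [k' _ <-]; have [k'k|kk'] := leqP k' k.
  apply: le_trans (dWLk_homo d k'k) _; apply: dWLk_le_Citer => x y.
  by case/andP: (HLU x y).
apply: dWLk_le_Citer => x y; rewrite -(subnK (ltnW kk')) Citer_add.
by case/andP: (Citer_bounds HX HY HLU (k' - k) x y).
Qed.

Lemma dWLinf_dist d k D :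
  (forall x y x' y', Citer mX mY d k x y - Citer mX mY d k x' y' <= D) ->
  forall i j, `|Citer mX mY d k i j - dWLinf mX mY muX muY d| <= D.
Proof.
move=> HD i j; have /andP[lo hi] : Citer mX mY d k i j - D <= dWLinf mX mY muX muY d
    <= Citer mX mY d k i j + D.
  apply: dWLinf_between => x y; have := HD i j x y; have := HD x y i j.
  by move=> h1 h2; apply/andP; split; lra.
by rewrite ler_norml; apply/andP; split; lra.
Qed.

End MarkovCouplings.

Theorem theorem27 (R : realType) (T : finType) (mX mY : T -> T -> R)
    (muX muY : T -> R) :
  is_kernel mX -> is_kernel mY ->
  irreducible mX -> aperiodic mX -> irreducible mY -> aperiodic mY ->
  stationary mX muX -> (forall mu, stationary mX mu -> mu = muX) ->
  stationary mY muY -> (forall mu, stationary mY mu -> mu = muY) ->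
  exists rho : R, 0 <= rho < 1 /\
    forall d : T -> T -> R, pseudometric d ->
    forall (k : nat) (i j : T),
      `|Citer mX mY d k i j - dWLinf mX mY muX muY d| <= 2 * rho ^+ k * supnorm d.
Proof.
move=> HX HY IX AX IY AY SX _ SY _.
have [NX [aX [NX0 [/andP[aX0 aX1] HNX]]]] := nonmeet_unif_lt1 HX IX AX.
have [NY [aY [_ [/andP[aY0 aY1] HNY]]]] := nonmeet_unif_lt1 HY IY AY.
pose N := maxn NX NY; pose a := Num.max aX aY.
have N0 : (0 < N)%N by rewrite leq_max NX0.
have a0 : 0 <= a by rewrite le_max aX0.
have a1 : a < 1 by rewrite gt_max aX1 aY1.
have [rho [rho01 Hrho]] := geometric_rate N0 a0 a1.
exists rho; split=> // d Hd k i j.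
have HDX x x' : nonmeet mX k x x' <= a ^+ (k %/ N).
  apply: (nonmeet_le_expr HX _ a0) => y y'.
  by rewrite le_max HNX ?leq_maxl.
have HDY y y' : nonmeet mY k y y' <= a ^+ (k %/ N).
  apply: (nonmeet_le_expr HY _ a0) => z z'.
  by rewrite le_max HNY ?leq_maxr ?orbT.
have osc x y x' y' : Citer mX mY d k x y - Citer mX mY d k x' y'
    <= Num.min 1 (2 * a ^+ (k %/ N)) * supnorm d.
  apply: le_trans (Citer_osc HX HY Hd k x y x' y') _.
  by rewrite ler_wpM2r ?supnorm_ge0 // le_min2 // mulr_natl mulr2n lerD.
apply: le_trans (dWLinf_dist HX HY SX SY osc i j) _.
by rewrite ler_wpM2r ?supnorm_ge0.
Qed.
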